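(* Let $(E,\mathscr{T},\le)$ be a locally compact $T_2$-preordered Tychonoff space with $G(\le)=\bigcap_{f\in\mathcal{F}}G_f$. Then for every $\mathcal{H}\subseteq\mathcal{F}$ with $G(\le)=\bigcap_{h\in\mathcal{H}}G_h$ we have $i(i(\mathcal{H}))=i(\mathcal{H})$; and if $\mathcal{H}_1\subseteq\mathcal{H}_2\subseteq\mathcal{F}$ with $G(\le)=\bigcap_{h\in\mathcal{H}_1}G_h$, then $i(\mathcal{H}_1)\subseteq i(\mathcal{H}_2)$.
   Context: $T_2$-preordered: the graph $G(\le)=\{(x,y):x\le y\}$ is closed in $E\times E$. $\mathcal{F}$ is the family of continuous isotone functions $f:E\to[0,1]$; $G_f=\{(x,y):f(x)\le f(y)\}$. $\mathcal{C}$ is the family of continuous functions $E\to[0,1]$ constant outside a compact set. For $\mathcal{H}\subseteq\mathcal{F}$ with $G(\le)=\bigcap_{h\in\mathcal{H}}G_h$, the $\mathcal{H}$-compactification is $c:E\to[0,1]^{\mathcal{H}\cup\mathcal{C}}$, $c(x)=(g(x))_{g\in\mathcal{H}\cup\mathcal{C}}$, with $cE$ the closure of $c(E)$, induced product topology, and preorder $x\le_c y$ iff $x_h\le y_h$ for all $h\in\mathcal{H}$. $i(\mathcal{H})$ is the set of $f\in\mathcal{F}$ such that $f\circ c^{-1}:c(E)\to[0,1]$ extends to a continuous isotone function on $(cE,\le_c)$ for the $\mathcal{H}$-compactification $c$; it contains $\mathcal{H}$ and hence also represents $\le$. *)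

From HB Require Import structures.
From mathcomp Require Import all_boot all_order all_algebra.
From mathcomp Require Import all_classical all_reals all_analysis.
Unset Printing Implicit Defensive.
Import Order.TTheory GRing.Theory Num.Theory.
Import numFieldNormedType.Exports.
Local Open Scope classical_set_scope.
Local Open Scope ring_scope.

Section Defs.
Context {R : realType} {E : topologicalType}.

Definition graph_of (le : E -> E -> Prop) : set (E * E) :=
  [set xy | le xy.1 xy.2].

Definition Gf (f : E -> R) : set (E * E) := [set xy | f xy.1 <= f xy.2].

Definition T2_preorder (le : E -> E -> Prop) : Prop :=
  (forall x, le x x) /\ (forall x y z, le x y -> le y z -> le x z) /\
  closed (graph_of le).

Definition unit_valued (f : E -> R) : Prop := forall x, 0 <= f x <= 1.

Definition Fam (le : E -> E -> Prop) : set (E -> R) :=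
  [set f : E -> R | continuous f /\ unit_valued f /\ (forall x y, le x y -> f x <= f y)].

Definition Cfam : set (E -> R) :=
  [set f : E -> R | continuous f /\ unit_valued f /\
     exists K : set E, compact K /\ exists a : R, forall x, ~ K x -> f x = a].

Definition represents (le : E -> E -> Prop) (H : set (E -> R)) : Prop :=
  graph_of le = \bigcap_(h in H) Gf h.

Definition Idx (H : set (E -> R)) : Type := {g : E -> R | (H `|` Cfam) g}.

(* the map c : E -> [0,1]^(H \cup C), viewed inside R^(H \cup C)
   with the product topology *)
Definition cmap (H : set (E -> R)) (x : E) : {ptws Idx H -> R} :=
  fun g => sval g x.

Definition cE (H : set (E -> R)) : set {ptws Idx H -> R} :=
  closure (range (cmap H)).

Definition le_c (H : set (E -> R)) (u v : {ptws Idx H -> R}) : Prop :=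
  forall (g : Idx H), H (sval g) -> u g <= v g.

Definition iH (le : E -> E -> Prop) (H : set (E -> R)) : set (E -> R) :=
  [set f | Fam le f /\
    exists g : {ptws Idx H -> R} -> R,
      {within cE H, continuous g} /\
      (forall u, cE H u -> 0 <= g u <= 1) /\
      (forall u v, cE H u -> cE H v -> le_c H u v -> g u <= g v) /\
      (forall x, g (cmap H x) = f x)].

End Defs.

From HB Require Import structures.
From mathcomp Require Import all_boot all_order all_algebra.
From mathcomp Require Import all_classical all_reals all_analysis.
Import Order.TTheory GRing.Theory Num.Theory.
Import numFieldNormedType.Exports.
Local Open Scope classical_set_scope.
Local Open Scope ring_scope.

(* [i] behaves like a closure operator for purely formal reasons.  A map [phi]
   between the products indexed by two index sets that is continuous on [cE],
   compatible with [c] and isotone for the preorders sends [cE] into [cE], so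
   isotone extensions pull back along it.  For [H1 <= H2] restriction of
   coordinates is such a map from [cE H2] to [cE H1].  For idempotence, the map
   from [cE H] to [cE (i H)] whose [i H]-coordinates are the values of chosen
   extensions is such a map; together with [H <= i H] this gives
   [i (i H) = i H]. *)

Section pointwise.
Context {J : Type} {V : topologicalType}.

Lemma ptws_coord_cvg (F : set_system {ptws J -> V}) (f : {ptws J -> V}) :
  Filter F -> F --> f <-> forall i, (fun g : {ptws J -> V} => g i) @ F --> f i.
Proof.
move=> FF; split => [/cvg_sup Fi i U|Fi].
  rewrite /= nbhs_simpl nbhsE => -[B [oB Bf] BU].
  have Bi : nbhs (f : initial_topology (fun g : {ptws J -> V} => g i))
      ((fun g : {ptws J -> V} => g i) @^-1` B).
    by apply: open_nbhs_nbhs; split => //; exists B.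
  by apply: filterS (Fi i _ Bi) => g /BU.
apply/cvg_sup => i U.
have /= -> := @nbhsE (initial_topology (fun g : {ptws J -> V} => g i)) f.
case=> B [[C oC <- ?]] /filterS; apply.
by apply: (Fi i); apply: open_nbhs_nbhs.
Qed.

Lemma ptws_coord_continuous (i : J) :
  continuous (fun g : {ptws J -> V} => g i).
Proof. by move=> f; exact: ((ptws_coord_cvg (nbhs f) f _).1 cvg_id i). Qed.

Lemma ptws_within_continuous {X : topologicalType} (A : set X)
    (phi : X -> {ptws J -> V}) :
  (forall i, {within A, continuous (fun x => phi x i)}) ->
  {within A, continuous phi}.
Proof.
move=> phic; apply/subspace_continuousP => x Ax.
apply/ptws_coord_cvg => i.
exact: (subspace_continuousP _ _).1 (phic i) x Ax.
Qed.

End pointwise.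

Lemma continuous_closure_sub {X Y : topologicalType} (S : set X) (S' : set Y)
    (phi : X -> Y) :
  {within closure S, continuous phi} -> phi @` S `<=` S' ->
  phi @` closure S `<=` closure S'.
Proof.
move=> /subspace_continuousP phic SS' _ [u Su <-] B Bn.
have := phic _ Su _ Bn; rewrite /= nbhs_simpl => /Su [y [Sy By]].
exists (phi y); split; first by apply: SS'; exists y.
exact: By (subset_closure Sy).
Qed.

Lemma within_continuous_comp_sub {X Y Z : topologicalType} (A : set X)
    (B : set Y) (phi : X -> Y) (g : Y -> Z) :
  {within A, continuous phi} -> {within B, continuous g} ->
  phi @` A `<=` B -> {within A, continuous (g \o phi)}.
Proof.
move=> /subspace_continuousP phic /subspace_continuousP gc AB.
apply/subspace_continuousP => x Ax W Wn.
have BphiA y : A y -> B (phi y) by move=> Ay; apply: AB; exists y.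
have gW : nbhs (phi x) [set y | B y -> W (g y)] := gc _ (BphiA _ Ax) _ Wn.
have phiW : nbhs x [set y | A y -> B (phi y) -> W (g (phi y))] :=
  phic _ Ax _ gW.
change (nbhs x [set y | A y -> W (g (phi y))]).
by apply: filterS phiW => y Wy Ay; exact: Wy Ay (BphiA _ Ay).
Qed.

Section compactification.
Context {R : realType} {E : topologicalType} (le : E -> E -> Prop).

Definition isotone_extension (H : set (E -> R)) (f : E -> R)
    (g : {ptws Idx H -> R} -> R) : Prop :=
  {within cE H, continuous g} /\
  (forall u, cE H u -> 0 <= g u <= 1) /\
  (forall u v, cE H u -> cE H v -> le_c H u v -> g u <= g v) /\
  (forall x, g (cmap H x) = f x).

Lemma iH_pullback (H K : set (E -> R))
    (phi : {ptws Idx H -> R} -> {ptws Idx K -> R}) :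
  {within cE H, continuous phi} ->
  (forall x, phi (cmap H x) = cmap K x) ->
  (forall u v, cE H u -> cE H v -> le_c H u v -> le_c K (phi u) (phi v)) ->
  iH le K `<=` iH le H.
Proof.
move=> phic phi_cmap phi_mono f [Ff [g [gc [g01 [g_mono g_cmap]]]]].
have phi_cE : phi @` cE H `<=` cE K.
  apply: continuous_closure_sub => // _ [_ [x _ <-] <-].
  by exists x; rewrite ?phi_cmap.
have cEK u : cE H u -> cE K (phi u) by move=> Hu; apply: phi_cE; exists u.
split => //; exists (g \o phi); split; [|split; [|split]].
- exact: within_continuous_comp_sub gc phi_cE.
- by move=> u /cEK; exact: g01.
- by move=> u v Hu Hv uv; apply: g_mono; [exact: cEK|exact: cEK|exact: phi_mono].
- by move=> x /=; rewrite phi_cmap.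
Qed.

Section monotonicity.
Variables H1 H2 : set (E -> R).
Hypothesis H12 : H1 `<=` H2.

Definition widen_idx (k : Idx H1) : Idx H2 :=
  exist _ (sval k) (setSU H12 (svalP k)).

Definition restrict_coords (v : {ptws Idx H2 -> R}) : {ptws Idx H1 -> R} :=
  fun k => v (widen_idx k).

Lemma iHS : iH le H1 `<=` iH le H2.
Proof.
apply: (@iH_pullback _ _ restrict_coords) => // [|u v _ _ uv k H1k].
  apply: ptws_within_continuous => k; apply: continuous_subspaceT.
  exact: ptws_coord_continuous.
exact: uv (widen_idx k) (H12 _ H1k).
Qed.

End monotonicity.

Lemma cE_unit_valued (H : set (E -> R)) (k : Idx H) :
  unit_valued (sval k) -> forall u, cE H u -> 0 <= u k <= 1.
Proof.
move=> k01 u cEu.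
have unit_closed : closed [set u : {ptws Idx H -> R} | 0 <= u k <= 1].
  have -> : [set u : {ptws Idx H -> R} | 0 <= u k <= 1] =
      (fun u : {ptws Idx H -> R} => u k) @^-1` (`[0, 1]%classic).
    by apply/seteqP; split => v; rewrite /= in_itv.
  apply: preimage_closed; first by move=> v _; exact: ptws_coord_continuous.
  exact: interval_closed.
have unit_range : range (cmap H) `<=` [set u : {ptws Idx H -> R} | 0 <= u k <= 1].
  by move=> _ [x _ <-]; exact: k01.
exact: unit_closed _ (closureS unit_range cEu).
Qed.

Lemma subset_iH (H : set (E -> R)) : H `<=` Fam le -> H `<=` iH le H.
Proof.
move=> HF h Hh; split; first exact: HF.
pose k : Idx H := exist _ h (or_introl Hh).
exists (fun u => u k); split; [|split; [|split]] => //.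
- by apply: continuous_subspaceT; exact: ptws_coord_continuous.
- by apply: cE_unit_valued; exact: (HF _ Hh).2.1.
- by move=> u v _ _ uv; exact: uv k Hh.
Qed.

Section idempotence.
Variable H : set (E -> R).

Definition extension (f : E -> R) : {ptws Idx H -> R} -> R :=
  if pselect (iH le H f) is left iHf then projT1 (cid (proj2 iHf))
  else fun=> 0.

Lemma extensionP {f : E -> R} : iH le H f -> isotone_extension H f (extension f).
Proof. by rewrite /extension; case: pselect => // iHf _; exact: projT2 (cid _). Qed.

Lemma Cfam_idx_notin_iH {k : Idx (iH le H)} : ~ iH le H (sval k) -> Cfam (sval k).
Proof. by case: (svalP k). Qed.

Definition extend_coords (u : {ptws Idx H -> R}) : {ptws Idx (iH le H) -> R} :=
  fun k => match pselect (iH le H (sval k)) with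
  | left _ => extension (sval k) u
  | right notiH => u (exist _ (sval k) (or_intror (Cfam_idx_notin_iH notiH)))
  end.

Lemma iH_iH_sub : iH le (iH le H) `<=` iH le H.
Proof.
apply: (@iH_pullback _ _ extend_coords).
- apply: ptws_within_continuous => k; rewrite /extend_coords.
  case: pselect => [iHk|notiH]; first by case: (extensionP iHk).
  by apply: continuous_subspaceT; exact: ptws_coord_continuous.
- move=> x; apply: functional_extensionality_dep => k; rewrite /extend_coords.
  by case: pselect => // iHk; case: (extensionP iHk) => _ [_ [_ ->]].
- move=> u v Hu Hv uv k iHk; rewrite /extend_coords.
  case: pselect => // {}iHk.
  by case: (extensionP iHk) => _ [_ [mono _]]; exact: mono Hu Hv uv.
Qed.

End idempotence.

End compactification.

Theorem mainTheorem15 (R : realType) (E : topologicalType)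
  (le : E -> E -> Prop) :
  T2_preorder le ->
  hausdorff_space E ->
  completely_regular_space E ->
  locally_compact [set: E] ->
  represents le (@Fam R E le) ->
  (forall H : set (E -> R), H `<=` Fam le -> represents le H ->
     iH le (iH le H) = iH le H) /\
  (forall H1 H2 : set (E -> R), H1 `<=` H2 -> H2 `<=` Fam le ->
     represents le H1 -> iH le H1 `<=` iH le H2).
Proof.
move=> _ _ _ _ _; split => [H HF _|H1 H2 H12 _ _]; last exact: iHS.
apply/seteqP; split; first exact: iH_iH_sub.
exact/iHS/subset_iH.
Qed.
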